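(* Let $\{(X_j,\mathcal R_j,\mu_j):j\in\Lambda\}$ be a family of probability measure spaces indexed by a set $\Lambda$, such that each covering ring $\mathcal R_j$ is complete relative to $\mu_j$ (i.e. $\mathcal R_j=\mathcal R_{\mu_j}$) and each $(X_j,\tau_{\mathcal R_j})$ is Hausdorff. Let $X:=\prod_{j\in\Lambda}X_j$ with the product (Tychonoff) topology, each $X_j$ carrying the topology $\tau_{\mathcal R_j}$, let $\pi_j:X\to X_j$ be the projections, and let $\mathcal R$ be the ring $\bigcup_{j_1,\dots,j_n\in\Lambda,\,n\in\mathbf N}\bigcap_{l=1}^n\pi_{j_l}^{-1}(\mathcal R_{j_l})$ of cylinder sets. Let $\mu:\mathcal R\to\mathbf K$ be a cylindrical distribution, i.e. $\mu\big(\bigcap_{l=1}^n\pi_{j_l}^{-1}(A_l)\big)=\prod_{l=1}^n\mu_{j_l}(A_l)$ for all pairwise distinct $j_1,\dots,j_n\in\Lambda$, $n\in\mathbf N$, and $A_l\in\mathcal R_{j_l}$. Then $\mu$ has an extension to a probability measure $\mu$ on $(X,\mathcal R_\mu)$, where $\mathcal R_\mu$ is the completion of $\mathcal R$ relative to $\mu$.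
   Context: $\mathbf K$ is a field with a nontrivial non-Archimedean valuation $|\cdot|$, $\mathbf K\supset\mathbf Q_p$, complete as an ultrametric space. A covering ring of a set $X$ is a family of subsets closed under finite unions, intersections and differences whose union is $X$; it defines the topology $\tau_{\mathcal R}$ on $X$ with base $\mathcal R$. A subfamily $\mathcal S\subset\mathcal R$ is shrinking if for all $A,B\in\mathcal S$ there is $C\in\mathcal S$ with $C\subset A\cap B$. A measure $\mu:\mathcal R\to\mathbf K$ is finitely additive on disjoint sets, has $\|A\|_\mu:=\sup\{|\mu(B)|:B\in\mathcal R,B\subset A\}<\infty$ for all $A\in\mathcal R$, and satisfies: for every shrinking $\mathcal S\subset\mathcal R$ with empty intersection and every $\epsilon>0$ there is $B\in\mathcal S$ with $|\mu(A)|\le\epsilon$ for all $A\in\mathcal S$, $A\subset B$. A probability measure satisfies $\mu(X)=1$ and $\|\mu\|:=\|X\|_\mu=1$. Put $N_\mu(x):=\inf_{x\in U\in\mathcal R}\|U\|_\mu$. A function $f:X\to\mathbf K$ is $\mu$-integrable if there are $\mathcal R$-step functions $f_n$ (finite $\mathbf K$-linear combinations of characteristic functions of elements of $\mathcal R$) with $\sup_{x\in X}|f(x)-f_n(x)|N_\mu(x)\to0$; the completion $\mathcal R_\mu\supset\mathcal R$ is the ring of subsets $A\subset X$ whose characteristic functions are $\mu$-integrable, and $\mu$ extends to it. *)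

From Stdlib Require Lists.List.
From mathcomp Require Import all_boot all_order all_algebra.
From mathcomp Require Import boolp classical_sets reals.
Set Implicit Arguments. Unset Strict Implicit. Unset Printing Implicit Defensive.
Import Order.TTheory GRing.Theory Num.Theory.
Local Open Scope classical_set_scope.
Local Open Scope ring_scope.

Definition nonarch_abs (R : realType) (K : fieldType) (v : K -> R) : Prop :=
  [/\ forall x, 0 <= v x,
      forall x, v x = 0 <-> x = 0,
      forall x y, v (x * y) = v x * v y &
      forall x y, v (x + y) <= Num.max (v x) (v y)].

Definition nontrivial_abs (R : realType) (K : fieldType) (v : K -> R) : Prop :=
  exists x, 0 < v x /\ v x < 1.

Definition complete_abs (R : realType) (K : fieldType) (v : K -> R) : Prop :=
  forall u : nat -> K,
    (forall eps : R, 0 < eps -> exists N, forall m n, (N <= m)%N -> (N <= n)%N ->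
        v (u m - u n) <= eps) ->
    exists l, forall eps : R, 0 < eps -> exists N, forall n, (N <= n)%N ->
        v (u n - l) <= eps.

(* K contains Q_p: K has characteristic 0 and the restriction of |.| to the
   prime field Q is the p-adic absolute value (for a non-Archimedean absolute
   value on Q this is equivalent to |p| < 1, by Ostrowski); together with
   completeness of K this means K contains (a copy of) Q_p. *)
Definition contains_Qp (R : realType) (K : fieldType) (v : K -> R) (p : nat) : Prop :=
  [/\ prime p, [pchar K] =i pred0 & v (p%:R) < 1].

Definition covering_ring (X : Type) (Rg : set (set X)) : Prop :=
  [/\ forall A B, Rg A -> Rg B -> Rg (A `|` B),
      forall A B, Rg A -> Rg B -> Rg (A `&` B),
      forall A B, Rg A -> Rg B -> Rg (A `\` B) &
      \bigcup_(A in Rg) A = setT].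

Definition tau_open (X : Type) (Rg : set (set X)) (U : set X) : Prop :=
  forall x, U x -> exists B, [/\ Rg B, B x & B `<=` U].

Definition tau_hausdorff (X : Type) (Rg : set (set X)) : Prop :=
  forall x y : X, x <> y ->
    exists U V, [/\ tau_open Rg U, tau_open Rg V, U x, V y & U `&` V = set0].

Definition shrinking (X : Type) (S : set (set X)) : Prop :=
  forall A B, S A -> S B -> exists C, S C /\ C `<=` A `&` B.

Definition sub_vals (R : realType) (K : fieldType) (v : K -> R) (X : Type)
  (Rg : set (set X)) (mu : set X -> K) (A : set X) : set R :=
  [set v (mu B) | B in [set B | Rg B /\ B `<=` A]].

Definition mnorm (R : realType) (K : fieldType) (v : K -> R) (X : Type)
  (Rg : set (set X)) (mu : set X -> K) (A : set X) : R :=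
  sup (sub_vals v Rg mu A).

Definition is_measure (R : realType) (K : fieldType) (v : K -> R) (X : Type)
  (Rg : set (set X)) (mu : set X -> K) : Prop :=
  [/\ forall A B, Rg A -> Rg B -> A `&` B = set0 -> mu (A `|` B) = mu A + mu B,
      forall A, Rg A -> has_ubound (sub_vals v Rg mu A) &
      forall S : set (set X), S `<=` Rg -> shrinking S -> \bigcap_(A in S) A = set0 ->
        forall eps : R, 0 < eps ->
          exists2 B, S B & forall A, S A -> A `<=` B -> v (mu A) <= eps].

Definition is_prob_measure (R : realType) (K : fieldType) (v : K -> R) (X : Type)
  (Rg : set (set X)) (mu : set X -> K) : Prop :=
  [/\ is_measure v Rg mu, Rg setT, mu setT = 1 & mnorm v Rg mu setT = 1].

Definition Nmu (R : realType) (K : fieldType) (v : K -> R) (X : Type)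
  (Rg : set (set X)) (mu : set X -> K) (x : X) : R :=
  inf [set mnorm v Rg mu U | U in [set U | Rg U /\ U x]].

Definition indic_K (K : fieldType) (X : Type) (A : set X) (x : X) : K :=
  if asbool (A x) then 1 else 0.
Arguments indic_K {K X} A x.

Definition step_fun (K : fieldType) (X : Type) (Rg : set (set X)) (f : X -> K) : Prop :=
  exists (n : nat) (c : 'I_n -> K) (B : 'I_n -> set X),
    (forall i, Rg (B i)) /\ f = fun x => \sum_(i < n) c i * indic_K (B i) x.

Definition integrable (R : realType) (K : fieldType) (v : K -> R) (X : Type)
  (Rg : set (set X)) (mu : set X -> K) (f : X -> K) : Prop :=
  exists fn : nat -> X -> K, (forall n, step_fun Rg (fn n)) /\
    forall eps : R, 0 < eps -> exists N, forall n, (N <= n)%N ->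
      forall x, v (f x - fn n x) * Nmu v Rg mu x <= eps.

Definition completion (R : realType) (K : fieldType) (v : K -> R) (X : Type)
  (Rg : set (set X)) (mu : set X -> K) : set (set X) :=
  [set A | integrable v Rg mu (indic_K A)].

Definition box (L : Type) (Xs : L -> Type) (J : seq L) (A : forall j, set (Xs j))
  : set (forall j, Xs j) :=
  [set x | forall j, Stdlib.Lists.List.In j J -> A j (x j)].

Definition cyl_ring (L : Type) (Xs : L -> Type) (Rj : forall j, set (set (Xs j)))
  : set (set (forall j, Xs j)) :=
  [set C | exists (n : nat) (J : nat -> seq L) (A : nat -> forall j, set (Xs j)),
     (forall i, (i < n)%N -> forall j, Stdlib.Lists.List.In j (J i) -> Rj j (A i j)) /\
     C = [set x | exists2 i, (i < n)%N & box (J i) (A i) x]].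

Definition cylindrical_distribution (K : fieldType) (L : Type) (Xs : L -> Type)
  (Rj : forall j, set (set (Xs j))) (muj : forall j, set (Xs j) -> K)
  (mu : set (forall j, Xs j) -> K) : Prop :=
  (forall A B, cyl_ring Rj A -> cyl_ring Rj B -> A `&` B = set0 ->
     mu (A `|` B) = mu A + mu B) /\
  (forall (J : seq L) (A : forall j, set (Xs j)), Stdlib.Lists.List.NoDup J ->
     (forall j, Stdlib.Lists.List.In j J -> Rj j (A j)) ->
     mu (box J A) = \prod_(j <- J) muj j (A j)).

From mathcomp Require Import all_boot all_order all_algebra.
From mathcomp Require Import boolp classical_sets reals filter.
From mathcomp Require Import ring lra.
Set Implicit Arguments. Unset Strict Implicit. Unset Printing Implicit Defensive.
Import Order.TTheory GRing.Theory Num.Theory.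
Local Open Scope classical_set_scope.
Local Open Scope ring_scope.

(* The cylindrical distribution is additive by hypothesis; what has to be shown
   is the continuity condition along shrinking families, and this is a
   compactness argument.  In a probability space call y e-heavy if every
   neighbourhood of y contains a set of measure > e in absolute value.  Every
   set of measure > e contains an e-heavy point, and the e-heavy points form a
   compact set: an ultrafilter containing them converges.  A cylinder of
   measure > e contains a box of measure > e, and as all |mu_j| are at most 1
   every side of that box has measure > e, so the box contains a point all of
   whose coordinates are e-heavy.  If a shrinking family of cylinders with empty
   intersection had, below each member, a member of measure > eps, an
   ultrafilter through the traces of the family on these points would converge
   coordinatewise, hence in the cylinder topology, to a point of every member.
   The extension to the completion works for any probability measure over a
   complete K: a set of R_mu is approximated by sets of R off {N_mu <= d}, its
   measure is the limit of their measures, and continuity follows from the same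
   compactness of the heavy points. *)

Section NonArchimedeanAbs.
Variables (R : realType) (K : fieldType) (v : K -> R).
Hypothesis Hv : nonarch_abs v.

Lemma abs_ge0 x : 0 <= v x. Proof. by case: Hv. Qed.

Lemma abs_eq0 x : v x = 0 -> x = 0. Proof. by case: Hv => _ vx0 _ _ /vx0. Qed.

Lemma abs0 : v 0 = 0. Proof. by case: Hv => _ vx0 _ _; apply/vx0. Qed.

Lemma absM x y : v (x * y) = v x * v y. Proof. by case: Hv. Qed.

Lemma abs1 : v 1 = 1.
Proof.
have v1_neq0 : v 1 != 0 by apply/eqP => /abs_eq0/eqP; rewrite oner_eq0.
by apply: (mulfI v1_neq0); rewrite -absM !mulr1.
Qed.

Lemma absN x : v (- x) = v x.
Proof.
have vN1 : v (-1) = 1.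
  have /eqP : v (-1) ^+ 2 = 1 by rewrite expr2 -absM mulrNN mulr1 abs1.
  rewrite sqrf_eq1 => /orP[/eqP //|/eqP vN1].
  by have := abs_ge0 (-1); rewrite vN1 ler0N1.
by rewrite -mulN1r absM vN1 mul1r.
Qed.

Lemma absD_le x y e : v x <= e -> v y <= e -> v (x + y) <= e.
Proof.
case: Hv => _ _ _ vD vx vy.
by apply: le_trans (vD x y) _; rewrite ge_max vx vy.
Qed.

Lemma absD_lt x y e : v x < e -> v y < e -> v (x + y) < e.
Proof.
case: Hv => _ _ _ vD vx vy.
by apply: le_lt_trans (vD x y) _; rewrite gt_max vx vy.
Qed.

Lemma absB_le x y e : v x <= e -> v y <= e -> v (x - y) <= e.
Proof. by move=> vx vy; apply: absD_le; rewrite ?absN. Qed.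

Lemma absBC x y : v (x - y) = v (y - x).
Proof. by rewrite -absN opprB. Qed.

Lemma absDB_gt a b c e :
  e < v (a + b - c) -> [\/ e < v a, e < v b | e < v c].
Proof.
move=> lt_e; have [va|va] := ltP e (v a); first by constructor 1.
have [vb|vb] := ltP e (v b); first by constructor 2.
have [vc|vc] := ltP e (v c); first by constructor 3.
by move: lt_e; rewrite ltNge (absB_le (absD_le va vb) vc).
Qed.

Lemma abs_prod (I : Type) (s : seq I) (f : I -> K) :
  v (\prod_(i <- s) f i) = \prod_(i <- s) v (f i).
Proof. by elim: s => [|a s IH]; rewrite ?big_nil ?abs1 // !big_cons absM IH. Qed.

Lemma abs_ge1 a : v (a - 1) < 1 -> 1 <= v a.
Proof.
move=> va1; rewrite leNgt; apply/negP => va.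
have : v (a - (a - 1)) < 1 by apply: absD_lt; rewrite ?absN.
by rewrite opprB addrC subrK abs1 ltxx.
Qed.

Lemma abs_small_eq0 a : (forall d, 0 < d -> v a <= d) -> a = 0.
Proof.
move=> small_a; apply: abs_eq0; apply/eqP; rewrite eq_le abs_ge0 andbT.
rewrite leNgt; apply/negP => va; have := small_a _ (divr_gt0 va (ltr0n R 2)).
lra.
Qed.

End NonArchimedeanAbs.

Lemma eventually_invSn_le (R : realType) (d : R) : 0 < d ->
  exists N : nat, forall n, (N <= n)%N -> n.+1%:R^-1 <= d.
Proof.
move=> d0; exists (Num.truncn d^-1) => n Nn.
have d_lt : d^-1 < n.+1%:R.
  by apply: lt_le_trans (truncnS_gt _) _; rewrite ler_nat ltnS.
by rewrite -(invrK d) lef_pV2 ?posrE ?invr_gt0 ?ltr0n // ltW.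
Qed.

Lemma prod_in01 (R : numDomainType) (I : Type) (s : seq I) (f : I -> R) :
  (forall i, List.In i s -> 0 <= f i <= 1) -> 0 <= \prod_(i <- s) f i <= 1.
Proof.
elim: s => [|a s IH] f01; first by rewrite big_nil ler01 lexx.
rewrite big_cons; have /andP[fa0 fa1] := f01 a (or_introl erefl).
have /andP[p0 p1] := IH (fun k sk => f01 k (or_intror sk)).
by rewrite mulr_ge0 // mulr_ile1.
Qed.

Lemma prod_le_factor (R : numDomainType) (I : Type) (s : seq I) (f : I -> R) i :
  (forall i, List.In i s -> 0 <= f i <= 1) -> List.In i s ->
  \prod_(k <- s) f k <= f i.
Proof.
elim: s => [|a s IH] //= f01 si; rewrite big_cons.
have /andP[fa0 fa1] := f01 a (or_introl erefl).
have f01' k (sk : List.In k s) := f01 k (or_intror sk).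
have /andP[p0 p1] := prod_in01 f01'.
case: si => [<-|si]; first by rewrite ler_piMr.
by apply: le_trans (IH f01' si); rewrite ler_piMl.
Qed.

Section Ultrafilters.
Variable T : Type.

Lemma ultra_fmap (U : Type) (f : T -> U) (F : set_system T) :
  UltraFilter F -> UltraFilter (fmap f F).
Proof.
move=> FU; split; first exact: fmap_proper_filter.
move=> G PG sFG; apply/seteqP; split=> // A GA.
have [//|FnA] := in_ultra_setVsetC (f @^-1` A) FU.
have GnA : G (~` A) by apply: sFG; rewrite /fmap preimage_setC.
by have /filter_ex[? []] : G (A `&` ~` A) by apply: filterI.
Qed.

Lemma ultra_setUN (F : set_system T) A B :
  UltraFilter F -> ~ F A -> ~ F B -> ~ F (A `|` B).
Proof.
move=> FU nFA nFB FAB.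
have FnA := in_ultra_setVsetC A FU; have FnB := in_ultra_setVsetC B FU.
case: FnA FnB => // FnA [//|FnB].
have : F ((A `|` B) `&` (~` A `&` ~` B)) by apply: filterI => //; apply: filterI.
by move=> /filter_ex[x [[Ax|Bx] [nAx nBx]]].
Qed.

Lemma ultra_trace (S : set (set T)) (G : set T) :
  S !=set0 -> shrinking S -> (forall A, S A -> A `&` G !=set0) ->
  exists U, [/\ UltraFilter U, U G & S `<=` U].
Proof.
move=> [A0 SA0] shS SG.
have base_filter : Filter (filter_from S (fun A => A `&` G)).
  apply: filter_from_filter; first by exists A0.
  move=> A B SA SB; have [C [SC CAB]] := shS A B SA SB.
  by exists C => // x [/CAB[Ax Bx] Gx].
have [U [UU sub]] := ultraFilterLemma (filter_from_proper base_filter SG).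
exists U; split => //; first by apply: sub; exists A0 => // x [].
by move=> A SA; apply: sub; exists A => // x [].
Qed.

End Ultrafilters.

Definition fin_additive (K : fieldType) (T : Type) (Rg : set (set T))
    (m : set T -> K) : Prop :=
  forall A B, Rg A -> Rg B -> A `&` B = set0 -> m (A `|` B) = m A + m B.

Definition measure_continuity (R : realType) (K : fieldType) (v : K -> R)
    (T : Type) (Rg : set (set T)) (m : set T -> K) : Prop :=
  forall S : set (set T), S `<=` Rg -> shrinking S -> \bigcap_(A in S) A = set0 ->
  forall eps : R, 0 < eps ->
  exists2 B, S B & forall A, S A -> A `<=` B -> v (m A) <= eps.

Definition base_cvg (T : Type) (Rg : set (set T)) (U : set_system T) (y : T) :=
  forall V, Rg V -> V y -> U V.

Lemma tail_large (R : realType) (T : Type) (S : set (set T)) (f : set T -> R) eps :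
  ~ (exists2 B, S B & forall A, S A -> A `<=` B -> f A <= eps) ->
  forall B, S B -> exists A, [/\ S A, A `<=` B & eps < f A].
Proof.
move=> no_small B SB; apply: contrapT => all_small; apply: no_small.
exists B => // A SA AB; rewrite leNgt; apply/negP => lt_eps.
by apply: all_small; exists A.
Qed.

Lemma bigcap_eq0_nonempty (T : Type) (S : set (set T)) :
  [set: T] !=set0 -> \bigcap_(A in S) A = set0 -> S !=set0.
Proof.
move=> [x _] capS; apply: contrapT => S0.
suff : (\bigcap_(A in S) A) x by rewrite capS.
by move=> A SA; exfalso; apply: S0; exists A.
Qed.

Section CoveringRing.
Variables (T : Type) (Rg : set (set T)).
Hypothesis HR : covering_ring Rg.

Lemma ringU A B : Rg A -> Rg B -> Rg (A `|` B). Proof. by case: HR => + _ _ _; apply. Qed.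
Lemma ringI A B : Rg A -> Rg B -> Rg (A `&` B). Proof. by case: HR => _ + _ _; apply. Qed.
Lemma ringD A B : Rg A -> Rg B -> Rg (A `\` B). Proof. by case: HR => _ _ + _; apply. Qed.

Hypothesis HT : Rg setT.

Lemma ring0 : Rg set0. Proof. by rewrite -(setDv setT); apply: ringD. Qed.
Lemma ringC A : Rg A -> Rg (~` A). Proof. by move=> RA; rewrite -setTD; apply: ringD. Qed.

Lemma step_fun_preimage (K : fieldType) (f : T -> K) (P : set K) :
  step_fun Rg f -> Rg (f @^-1` P).
Proof.
move=> [n [c [B [RB ->]]]]; elim: n c B RB P => [|n IH] c B RB P.
  have -> : (fun x => \sum_(i < 0) c i * indic_K (B i) x) @^-1` P =
      if `[< P 0 >] then setT else set0.
    by apply/seteqP; split=> x; rewrite /preimage /= big_ord0; case: asboolP.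
  by case: asboolP => _; [exact: HT | exact: ring0].
pose c' (i : 'I_n) := c (widen_ord (leqnSn n) i).
pose B' (i : 'I_n) := B (widen_ord (leqnSn n) i).
pose f' x := \sum_(i < n) c' i * indic_K (B' i) x.
have -> : (fun x => \sum_(i < n.+1) c i * indic_K (B i) x) @^-1` P =
    (f' @^-1` [set y | P (y + c ord_max)] `&` B ord_max) `|` (f' @^-1` P `\` B ord_max).
  apply/seteqP; split=> x; rewrite /preimage /= big_ord_recr /= /indic_K;
    case: asboolP => Bx; rewrite ?mulr1 ?mulr0 ?addr0.
  - by left.
  - by right.
  - by case=> -[].
  - by case=> -[].
have Rf' Q : Rg (f' @^-1` Q) by apply: IH => i; apply: RB.
by apply: ringU; [apply: ringI | apply: ringD].
Qed.

End CoveringRing.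

Section AdditiveSetFunction.
Variables (K : fieldType) (T : Type) (Rg : set (set T)) (m : set T -> K).
Hypotheses (HR : covering_ring Rg) (HT : Rg setT) (madd : fin_additive Rg m).

Lemma additive0 : m set0 = 0.
Proof.
have := madd (ring0 HR HT) (ring0 HR HT) (setI0 set0).
by rewrite setU0 => /(congr1 (fun t => t - m set0)); rewrite subrr addrK.
Qed.

Lemma additive_nonempty A : m A != 0 -> A !=set0.
Proof. by move=> mA; apply/set0P; apply: contra_neq mA => ->; exact: additive0. Qed.

Lemma additive_split A B : Rg A -> Rg B -> m A = m (A `&` B) + m (A `\` B).
Proof.
move=> RA RB; rewrite -madd ?setUIDK //; try by [apply: ringI | apply: ringD].
by rewrite setDE setIACA setICr setI0.
Qed.

Lemma additive_union A B : Rg A -> Rg B -> m (A `|` B) = m A + m B - m (A `&` B).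
Proof.
move=> RA RB; have RAB := ringU HR RA RB.
rewrite (additive_split RAB RA) setUK (additive_split RB RA).
have -> : (A `|` B) `\` A = B `\` A by rewrite setDUl setDv set0U.
by rewrite setIC; ring.
Qed.

End AdditiveSetFunction.

Section MeasureSpace.
Variables (R : realType) (K : fieldType) (v : K -> R).
Hypothesis Hv : nonarch_abs v.
Variables (T : Type) (Rg : set (set T)) (m : set T -> K).
Hypotheses (HR : covering_ring Rg) (HT : Rg setT).
Hypotheses (madd : fin_additive Rg m) (mcont : measure_continuity v Rg m).

(* N_mu y > e implies heavy e y, which implies N_mu y >= e. *)
Definition heavy (e : R) (y : T) :=
  forall V, Rg V -> V y -> exists A, [/\ Rg A, A `<=` V & e < v (m A)].

Definition small (e : R) (V : set T) :=
  Rg V /\ forall A, Rg A -> A `<=` V -> v (m A) <= e.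

Lemma smallU e V W : small e V -> small e W -> small e (V `|` W).
Proof.
move=> [RV smV] [RW smW]; split; first exact: ringU.
move=> A RA AVW; rewrite (additive_split HR madd RA RV); apply: absD_le => //.
  by apply: smV; [exact: ringI | move=> x []].
by apply: smW; [exact: ringD | move=> x [/AVW[]]].
Qed.

Lemma heavy_point e D : 0 < e -> Rg D -> e < v (m D) -> exists y, D y /\ heavy e y.
Proof.
move=> e0 RD lt_eD; apply: contrapT => no_heavy.
have small_nbhs y : D y -> exists V, small e V /\ V y.
  move=> Dy; apply: contrapT => no_small; apply: no_heavy; exists y; split => // V RV Vy.
  apply: contrapT => no_large; apply: no_small; exists V; split => //; split => // A RA AV.
  by rewrite leNgt; apply/negP => lt_eA; apply: no_large; exists A.
pose S := [set D `\` V | V in small e].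
have SR : S `<=` Rg by move=> _ [V [RV _] <-]; apply: ringD.
have shS : shrinking S.
  move=> _ _ [V smV <-] [W smW <-]; exists (D `\` (V `|` W)); split; last by rewrite setDUr.
  by exists (V `|` W) => //; apply: smallU.
have small0 : small e set0.
  split=> [|A _]; first exact: ring0.
  by rewrite subset0 => ->; rewrite (additive0 HR HT madd) abs0 // ltW.
have capS : \bigcap_(A in S) A = set0.
  apply/seteqP; split => // y Sy; have [Dy|nDy] := pselect (D y).
    have [V [smV Vy]] := small_nbhs y Dy.
    by have [] := Sy (D `\` V) (ex_intro2 _ _ V smV erefl).
  by have [] := Sy (D `\` set0) (ex_intro2 _ _ set0 small0 erefl).
have [_ [V0 [RV0 smV0] <-] small_tail] := mcont SR shS capS e0.
have le_DV0 : v (m (D `\` V0)) <= e by apply: small_tail => //; exists V0.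
have le_DV0' : v (m (D `&` V0)) <= e by apply: smV0; [exact: ringI | move=> x []].
by move: lt_eD; rewrite ltNge (additive_split HR madd RD RV0) (absD_le Hv le_DV0' le_DV0).
Qed.

(* The sets [heavy e] are compact for the topology with base [Rg]. *)
Lemma ultra_heavy_cvg e (U : set_system T) : 0 < e -> UltraFilter U ->
  U (heavy e) -> exists y, base_cvg Rg U y.
Proof.
move=> e0 UU Uheavy; apply: contrapT => no_cvg.
have nbhs_out y : exists V, [/\ Rg V, V y & ~ U V].
  apply: contrapT => all_in; apply: no_cvg; exists y => V RV Vy.
  by apply: contrapT => nUV; apply: all_in; exists V.
pose S := [set ~` A | A in [set A | Rg A /\ ~ U A]].
have SR : S `<=` Rg by move=> _ [A [RA _] <-]; apply: ringC.
have shS : shrinking S.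
  move=> _ _ [A [RA nUA] <-] [B [RB nUB] <-]; exists (~` (A `|` B)).
  split; last by rewrite setCU.
  by exists (A `|` B) => //; split; [exact: ringU | exact: ultra_setUN].
have capS : \bigcap_(A in S) A = set0.
  apply/seteqP; split => // y Sy; have [V [RV Vy nUV]] := nbhs_out y.
  by have := Sy (~` V) (ex_intro2 _ _ V (conj RV nUV) erefl).
have [_ [A0 [RA0 nUA0] <-] small_tail] := mcont SR shS capS e0.
have UA0 : U (~` A0) by case: (in_ultra_setVsetC A0 UU).
have /filter_ex[y [hy A0y]] : U (heavy e `&` ~` A0) by apply: filterI.
have [V [RV Vy nUV]] := nbhs_out y.
have [C [RC CV lt_eC]] := hy (V `&` ~` A0) (ringI HR RV (ringC HR HT RA0)) (conj Vy A0y).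
have nUC : ~ U C by move=> UC; apply: nUV; apply: filterS UC => x /CV[].
have le_A0C : v (m (~` A0 `\` C)) <= e.
  apply: small_tail; last by move=> x [].
  exists (A0 `|` C); last by rewrite setCU setDE.
  by split; [exact: ringU | exact: ultra_setUN].
have le_A0 : v (m (~` A0)) <= e by apply: small_tail => //; exists A0.
have mC : m C = m (~` A0) - m (~` A0 `\` C).
  rewrite (additive_split HR madd (ringC HR HT RA0) RC) setIidr; first by ring.
  by move=> x /CV[].
by move: lt_eC; rewrite mC ltNge (absB_le Hv le_A0 le_A0C).
Qed.

Lemma base_cvg_heavy e (U : set_system T) x : UltraFilter U ->
  U (heavy e) -> base_cvg Rg U x -> heavy e x.
Proof.
move=> UU Uheavy cvgx V RV Vx.
have /filter_ex[y [Vy hy]] : U (V `&` heavy e) by apply: filterI => //; apply: cvgx.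
exact: hy.
Qed.

End MeasureSpace.

Lemma base_cvg_mem (T : Type) (Rg : set (set T)) (U : set_system T) y C :
  covering_ring Rg -> Rg setT -> UltraFilter U ->
  base_cvg Rg U y -> Rg C -> U C -> C y.
Proof.
move=> HR HT UU cvgy RC UC; apply: contrapT => nCy.
have UnC : U (~` C) by apply: cvgy; [exact: ringC | exact: nCy].
by have /filter_ex[x []] : U (C `&` ~` C) by apply: filterI.
Qed.

Lemma prob_abs_le1 (R : realType) (K : fieldType) (v : K -> R) (T : Type)
    (Rg : set (set T)) (m : set T -> K) A :
  is_prob_measure v Rg m -> Rg A -> v (m A) <= 1.
Proof.
by case=> -[_ ub _] RT _ <- RA; apply: ub_le_sup; [exact: ub | exists A].
Qed.

Lemma prob_measure_le1 (R : realType) (K : fieldType) (v : K -> R) (T : Type)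
    (Rg : set (set T)) (m : set T -> K) :
  nonarch_abs v -> fin_additive Rg m -> measure_continuity v Rg m ->
  Rg setT -> m setT = 1 -> (forall A, Rg A -> v (m A) <= 1) ->
  is_prob_measure v Rg m.
Proof.
move=> Hv madd mcont RT mT le1; have ub A : has_ubound (sub_vals v Rg m A).
  by exists 1 => _ [B [RB _] <-]; exact: le1.
split=> //; apply/eqP; rewrite eq_le; apply/andP; split.
  by apply: ge_sup; [exists (v (m setT)), setT | move=> _ [B [RB _] <-]; exact: le1].
by rewrite -(abs1 Hv) -mT; apply: ub_le_sup; [exact: ub | exists setT].
Qed.

Section Completion.
Variables (R : realType) (K : fieldType) (v : K -> R).
Hypotheses (Hv : nonarch_abs v) (Hcomp : complete_abs v).
Variables (T : Type) (Rg : set (set T)) (m : set T -> K).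
Hypotheses (HR : covering_ring Rg) (Hm : is_prob_measure v Rg m).

Let HT : Rg setT. Proof. by case: Hm. Qed.
Let madd : fin_additive Rg m. Proof. by case: Hm => -[]. Qed.
Let mcont : measure_continuity v Rg m. Proof. by case: Hm => -[]. Qed.

Local Notation N := (Nmu v Rg m).
Local Notation mn := (mnorm v Rg m).
Local Notation cRg := (completion v Rg m).

Lemma mnorm_ge A B : Rg B -> B `<=` A -> v (m B) <= mn A.
Proof.
move=> RB BA; apply: ub_le_sup; last by exists B.
by exists 1 => _ [C [RC _] <-]; exact: prob_abs_le1 Hm RC.
Qed.

Lemma mnorm_ge0 A : 0 <= mn A.
Proof. by have := mnorm_ge (ring0 HR HT) (sub0set A); rewrite (additive0 HR HT madd) abs0. Qed.

Lemma Nmu_ge0 x : 0 <= N x.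
Proof.
apply: lb_le_inf; first by exists (mn setT), setT.
by move=> _ [V _ <-]; exact: mnorm_ge0.
Qed.

Lemma heavy_Nmu e x : heavy v Rg m e x -> e <= N x.
Proof.
move=> hx; apply: lb_le_inf; first by exists (mn setT), setT.
move=> _ [U [RU Ux] <-]; have [A [RA AU lt_eA]] := hx U RU Ux.
exact: le_trans (ltW lt_eA) (mnorm_ge RA AU).
Qed.

Lemma abs_le_Nmu d E : 0 <= d -> Rg E -> (forall x, E x -> N x <= d) ->
  v (m E) <= d.
Proof.
move=> d0 RE NE; rewrite leNgt; apply/negP => lt_dE.
pose d' := (d + v (m E)) / 2.
have [x [Ex hx]] : exists x, E x /\ heavy v Rg m d' x.
  by apply: heavy_point => //; rewrite /d'; lra.
by have := heavy_Nmu hx; have := NE x Ex; rewrite /d'; lra.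
Qed.

Definition approx (A C : set T) (d : R) :=
  Rg C /\ forall x, ~ (A x <-> C x) -> N x <= d.

Lemma approx_le A C d d' : d <= d' -> approx A C d -> approx A C d'.
Proof. by move=> dd' [RC apxC]; split=> // x /apxC /le_trans; apply. Qed.

Lemma approx_refl A d : Rg A -> approx A A d.
Proof. by move=> RA; split=> // x []. Qed.

Lemma approx_dist A C C' d : 0 <= d -> approx A C d -> approx A C' d ->
  v (m C - m C') <= d.
Proof.
move=> d0 [RC apxC] [RC' apxC'].
have -> : m C - m C' = m (C `\` C') - m (C' `\` C).
  by rewrite (additive_split HR madd RC RC') (additive_split HR madd RC' RC) setIC; ring.
apply: (absB_le Hv) => //; apply: abs_le_Nmu => //; try exact: ringD.
- move=> x [Cx nC'x]; have [Ax|nAx] := pselect (A x).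
    by apply: apxC'; case=> /(_ Ax).
  by apply: apxC; case=> _ /(_ Cx).
- move=> x [C'x nCx]; have [Ax|nAx] := pselect (A x).
    by apply: apxC; case=> /(_ Ax).
  by apply: apxC'; case=> _ /(_ C'x).
Qed.

Lemma approx_agree A C d e y : approx A C d -> d < e -> heavy v Rg m e y ->
  (A y <-> C y).
Proof.
move=> [_ apxC] lt_de hy; apply: contrapT => /apxC.
by have := heavy_Nmu hy; lra.
Qed.

Lemma approx_setop (op : set T -> set T -> set T) A B C D d :
  (forall C D, Rg C -> Rg D -> Rg (op C D)) ->
  (forall x, (A x <-> C x) -> (B x <-> D x) -> (op A B x <-> op C D x)) ->
  approx A C d -> approx B D d -> approx (op A B) (op C D) d.
Proof.
move=> Rop opx [RC apxC] [RD apxD]; split=> [|x nop]; first exact: Rop.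
have [ACx|] := pselect (A x <-> C x); last exact: apxC.
have [BDx|] := pselect (B x <-> D x); last exact: apxD.
by have := opx x ACx BDx.
Qed.

Lemma completion_approx A d : cRg A -> 0 < d -> exists C, approx A C d.
Proof.
move=> [fn [step_fn cvg_fn]] d0; have [M hM] := cvg_fn d d0.
(* Wherever this level set of [fn M] disagrees with [A], |1_A - fn M| >= 1. *)
exists (fn M @^-1` [set y | v (y - 1) < 1]).
split=> [|x nACx]; first exact: step_fun_preimage.
have := hM M (leqnn M) x; have N0 := Nmu_ge0 x.
rewrite /indic_K; case: asboolP => Ax le_d; apply: le_trans le_d.
- rewrite -[leLHS]mul1r ler_wpM2r // absBC // leNgt; apply/negP => Cx.
  by apply: nACx; split.
- rewrite -[leLHS]mul1r ler_wpM2r // sub0r absN // abs_ge1 //.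
  by apply: contrapT => nCx; apply: nACx; split.
Qed.

Lemma approx_completion A :
  (forall d, 0 < d -> exists C, approx A C d) -> cRg A.
Proof.
move=> apxA; have /choice[C apxC] : forall k : nat, exists C, approx A C k.+1%:R^-1.
  by move=> k; apply: apxA; rewrite invr_gt0 ltr0n.
exists (fun k => indic_K (C k)); split.
  move=> k; exists 1%N, (fun=> 1), (fun=> C k); split; first by case: (apxC k).
  by apply: funext => x; rewrite big_ord1 mul1r.
move=> eps eps0; have [M hM] := eventually_invSn_le eps0; exists M => k Mk x.
have [ACx|nACx] := pselect (A x <-> C k x).
  by rewrite /indic_K (propext ACx) subrr abs0 // mul0r ltW.
have -> : v (indic_K A x - indic_K (C k) x) = 1.
  rewrite /indic_K; case: asboolP => Ax; case: asboolP => Cx; try by exfalso; tauto.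
  - by rewrite subr0 abs1.
  - by rewrite sub0r absN // abs1.
by rewrite mul1r; apply: le_trans (hM k Mk); apply: (apxC k).2.
Qed.

Lemma completion_ring A : Rg A -> cRg A.
Proof. by move=> RA; apply: approx_completion => d _; exists A; exact: approx_refl. Qed.

Lemma completion_setop (op : set T -> set T -> set T) A B :
  (forall C D, Rg C -> Rg D -> Rg (op C D)) ->
  (forall A B C D x, (A x <-> C x) -> (B x <-> D x) -> (op A B x <-> op C D x)) ->
  cRg A -> cRg B -> cRg (op A B).
Proof.
move=> Rop opx cA cB; apply: approx_completion => d d0.
have [C apxC] := completion_approx cA d0; have [D apxD] := completion_approx cB d0.
by exists (op C D); apply: approx_setop (opx _ _ _ _) apxC apxD.
Qed.

Lemma completion_covering : covering_ring cRg.
Proof.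
split.
- by move=> A B; apply: completion_setop (ringU HR) _ => ? ? ? ? x /=; tauto.
- by move=> A B; apply: completion_setop (ringI HR) _ => ? ? ? ? x /=; tauto.
- by move=> A B; apply: completion_setop (ringD HR) _ => ? ? ? ? x /=; tauto.
- by apply/seteqP; split=> x // _; exists setT => //; exact: completion_ring.
Qed.

Definition ext_val (A : set T) (l : K) :=
  forall d, 0 < d -> forall C, approx A C d -> v (l - m C) <= d.

Lemma ext_val_exists A : cRg A -> exists l, ext_val A l.
Proof.
move=> cA; have /choice[C apxC] : forall k : nat, exists C, approx A C k.+1%:R^-1.
  by move=> k; apply: completion_approx; rewrite ?invr_gt0 ?ltr0n.
have [l lim_l] : exists l, forall eps, 0 < eps ->
    exists M, forall n, (M <= n)%N -> v (m (C n) - l) <= eps.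
  apply: Hcomp => eps eps0; have [M hM] := eventually_invSn_le eps0.
  exists M => i j Mi Mj; apply: approx_dist (ltW eps0) _ _.
  - exact: approx_le (hM _ Mi) (apxC i).
  - exact: approx_le (hM _ Mj) (apxC j).
exists l => d d0 D apxD.
have [M1 hM1] := lim_l d d0; have [M2 hM2] := eventually_invSn_le d0.
pose n := maxn M1 M2.
have -> : l - m D = (m (C n) - m D) - (m (C n) - l) by ring.
apply: (absB_le Hv) => //; last exact: hM1 (leq_maxl _ _).
by apply: approx_dist (ltW d0) _ apxD; apply: approx_le (hM2 _ (leq_maxr _ _)) (apxC n).
Qed.

Lemma ext_val_unique A l l' : cRg A -> ext_val A l -> ext_val A l' -> l = l'.
Proof.
move=> cA extl extl'; apply/eqP; rewrite -subr_eq0; apply/eqP.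
apply: (abs_small_eq0 Hv) => d d0; have [C apxC] := completion_approx cA d0.
have -> : l - l' = (l - m C) - (l' - m C) by ring.
by apply: (absB_le Hv) => //; [exact: extl | exact: extl'].
Qed.

Definition ext (A : set T) : K := xget 0 (ext_val A).

Lemma extP A : cRg A -> ext_val A (ext A).
Proof. by move=> cA; apply: xgetPex; exact: ext_val_exists. Qed.

Lemma ext_ring A : Rg A -> ext A = m A.
Proof.
move=> RA; have cA := completion_ring RA.
apply: ext_val_unique (extP cA) _ => // d d0 C apxC.
by apply: approx_dist (ltW d0) (approx_refl _ RA) apxC.
Qed.

Lemma ext_abs_le1 A : cRg A -> v (ext A) <= 1.
Proof.
move=> cA; have [C apxC] := completion_approx cA ltr01.
have -> : ext A = (ext A - m C) + m C by ring.
by apply: (absD_le Hv) => //; [exact: extP | exact: prob_abs_le1 Hm apxC.1].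
Qed.

Lemma ext_add : fin_additive cRg ext.
Proof.
move=> A B cA cB AB0; apply/eqP; rewrite -subr_eq0; apply/eqP.
apply: (abs_small_eq0 Hv) => d d0.
have [C apxC] := completion_approx cA d0; have [D apxD] := completion_approx cB d0.
have [[RC _] [RD _]] := (apxC, apxD).
have le_CD : v (m (C `&` D)) <= d.
  apply: abs_le_Nmu; [exact: ltW | exact: ringI |].
  move=> x [Cx Dx]; have [Ax|nAx] := pselect (A x).
    have nBx : ~ B x by move=> Bx; have : (A `&` B) x by []; rewrite AB0.
    by apply: apxD.2; case=> _ /(_ Dx).
  by apply: apxC.2; case=> _ /(_ Cx).
have apxCD : approx (A `|` B) (C `|` D) d.
  by apply: approx_setop (ringU HR) _ apxC apxD => x /=; tauto.
have cAB : cRg (A `|` B) by case: completion_covering => + _ _ _; apply.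
have -> : ext (A `|` B) - (ext A + ext B) =
    (ext (A `|` B) - m (C `|` D)) - (ext A - m C) - (ext B - m D) - m (C `&` D).
  by rewrite (additive_union HR madd RC RD); ring.
apply: (absB_le Hv) => //; apply: (absB_le Hv) => //; first apply: (absB_le Hv) => //.
- exact: extP cAB d d0 _ apxCD.
- exact: extP cA d d0 _ apxC.
- exact: extP cB d d0 _ apxD.
Qed.

Lemma ext_heavy_point e A : 0 < e -> cRg A -> e < v (ext A) ->
  exists y, A y /\ heavy v Rg m e y.
Proof.
move=> e0 cA lt_eA; have d0 : 0 < e / 2 by lra.
have [C apxC] := completion_approx cA d0.
have lt_eC : e < v (m C).
  rewrite ltNge; apply/negP => le_Ce; move: lt_eA; rewrite ltNge.
  have -> : ext A = (ext A - m C) + m C by ring.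
  by rewrite (absD_le Hv) // (le_trans (extP cA d0 apxC)) //; lra.
have [y [Cy hy]] := heavy_point Hv HR HT madd mcont e0 apxC.1 lt_eC.
by exists y; split=> //; apply/(approx_agree apxC _ hy) => //; lra.
Qed.

Lemma completion_cvg_mem e A (U : set_system T) x : 0 < e -> UltraFilter U ->
  cRg A -> U (A `&` heavy v Rg m e) -> base_cvg Rg U x ->
  heavy v Rg m e x -> A x.
Proof.
move=> e0 UU cA UA cvgx hx; have d0 : 0 < e / 2 by lra.
have [C apxC] := completion_approx cA d0.
have lt_de : e / 2 < e by lra.
apply/(approx_agree apxC lt_de hx); apply: (base_cvg_mem HR HT UU cvgx apxC.1).
by apply: filterS UA => y [Ay hy]; apply/(approx_agree apxC lt_de hy).
Qed.

Lemma ext_continuity : measure_continuity v cRg ext.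
Proof.
move=> S Sc shS capS eps eps0.
have [B0 SB0] : S !=set0.
  apply: bigcap_eq0_nonempty capS; apply: (additive_nonempty HR HT madd).
  by case: Hm => _ _ -> _; exact: oner_neq0.
have [le1_eps|lt_eps1] := leP 1 eps.
  by exists B0 => // A SA _; apply: le_trans le1_eps; exact: ext_abs_le1 (Sc A SA).
apply: contrapT => /tail_large large.
have meet A : S A -> A `&` heavy v Rg m eps !=set0.
  move=> SA; have [A' [SA' A'A lt_eA']] := large A SA.
  have [y [A'y hy]] := ext_heavy_point eps0 (Sc A' SA') lt_eA'.
  by exists y; split=> //; exact: A'A.
have [U [UU Uheavy SU]] := ultra_trace (ex_intro _ B0 SB0) shS meet.
have [x cvgx] := ultra_heavy_cvg Hv HR HT madd mcont eps0 UU Uheavy.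
have hx := base_cvg_heavy UU Uheavy cvgx.
suff : (\bigcap_(A in S) A) x by rewrite capS.
move=> A SA; apply: (completion_cvg_mem eps0 UU (Sc A SA) _ cvgx hx).
by apply: filterI => //; exact: SU.
Qed.

Theorem completion_extension : exists nu : set T -> K,
  [/\ forall A, Rg A -> nu A = m A, covering_ring cRg & is_prob_measure v cRg nu].
Proof.
exists ext; split; [exact: ext_ring | exact: completion_covering |].
apply: prob_measure_le1 => //.
- exact: ext_add.
- exact: ext_continuity.
- exact: completion_ring.
- by rewrite ext_ring //; case: Hm.
- exact: ext_abs_le1.
Qed.

End Completion.

Section Cylinders.
Local Unset Implicit Arguments.
Variables (L : Type) (Xs : L -> Type) (Rj : forall j, set (set (Xs j))).
Local Set Implicit Arguments.
Hypotheses (HRj : forall j, covering_ring (Rj j)) (HTj : forall j, Rj j setT).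

Local Notation X := (forall j, Xs j).
Local Notation cyl := (cyl_ring Rj).

Definition box_family (J : seq L) (A : forall j, set (Xs j)) :=
  forall j, List.In j J -> Rj j (A j).

Definition box_meet (J1 : seq L) (A1 : forall j, set (Xs j))
    (J2 : seq L) (A2 : forall j, set (Xs j)) : forall j, set (Xs j) :=
  fun j => (if `[< List.In j J1 >] then A1 j else setT) `&`
           (if `[< List.In j J2 >] then A2 j else setT).

Lemma box_nil (A : forall j, set (Xs j)) : box [::] A = setT.
Proof. by apply/seteqP; split=> x // _ j []. Qed.

Lemma box_cons j J (A : forall j, set (Xs j)) :
  box (j :: J) A = [set x | A j (x j)] `&` box J A.
Proof.
apply/seteqP; split=> x; last by move=> [Ajx Jx] k [<-|Jk] //; exact: Jx.
by move=> Jx; split=> [|k Jk]; apply: Jx; [left | right].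
Qed.

Lemma boxI J1 A1 J2 A2 :
  box J1 A1 `&` box J2 A2 = box (J1 ++ J2) (box_meet J1 A1 J2 A2).
Proof.
apply/seteqP; split=> x.
  move=> [J1x J2x] j _; rewrite /box_meet.
  by split; case: asboolP => // Jj; [exact: J1x | exact: J2x].
move=> Jx; split=> j Jj.
  by have := Jx j (List.in_or_app _ _ _ (or_introl Jj)); rewrite /box_meet (asboolT Jj) => -[].
by have := Jx j (List.in_or_app _ _ _ (or_intror Jj)); rewrite /box_meet (asboolT Jj) => -[].
Qed.

Lemma box_family_meet J1 A1 J2 A2 : box_family J1 A1 -> box_family J2 A2 ->
  box_family (J1 ++ J2) (box_meet J1 A1 J2 A2).
Proof.
move=> fam1 fam2 j _; rewrite /box_meet.
by apply: ringI => //; case: asboolP => // Jj; [exact: fam1 | exact: fam2].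
Qed.

Lemma cyl_box J A : box_family J A -> cyl (box J A).
Proof.
move=> famJA; exists 1%N, (fun=> J), (fun=> A); split=> //.
by apply/seteqP; split=> x; [exists 0%N | case].
Qed.

Lemma cylT : cyl setT.
Proof. by rewrite -(box_nil (fun j => setT)); apply: cyl_box => j []. Qed.

Lemma cyl0 : cyl set0.
Proof.
exists 0%N, (fun=> [::]), (fun _ j => setT); split=> //.
by apply/seteqP; split=> x // [].
Qed.

Lemma cyl_setU_box C J A : cyl C -> box_family J A -> cyl (C `|` box J A).
Proof.
move=> [n [J' [A' [fam ->]]]] famJA.
exists n.+1, (fun i => if i == n then J else J' i), (fun i => if i == n then A else A' i).
split=> [i|].
  rewrite ltnS leq_eqVlt => /orP[/eqP->|lt_in]; rewrite ?eqxx //.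
  by rewrite (ltn_eqF lt_in); apply: fam.
apply/seteqP; split=> x.
  case=> [[i lt_in J'x]|Jx]; last by exists n; rewrite ?eqxx.
  by exists i; rewrite ?(ltn_eqF lt_in) // ltnS ltnW.
case=> i; rewrite ltnS leq_eqVlt => /orP[/eqP->|lt_in]; rewrite ?eqxx; first by right.
by rewrite (ltn_eqF lt_in) => J'x; left; exists i.
Qed.

Lemma cyl_ring_ind (P : set X -> Prop) : P set0 ->
    (forall C J A, cyl C -> box_family J A -> P C -> P (C `|` box J A)) ->
  forall C, cyl C -> P C.
Proof.
move=> P0 PU C [n [J [A [fam ->]]]].
pose boxes n := [set x : X | exists2 i, (i < n)%N & box (J i) (A i) x].
change (P (boxes n)); elim: n fam => [|n IH] fam.
  by rewrite (_ : boxes 0%N = set0) //; apply/seteqP; split=> x // [].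
have famn i : (i < n)%N -> box_family (J i) (A i).
  by move=> lt_in; apply: fam; rewrite ltnS ltnW.
have -> : boxes n.+1 = boxes n `|` box (J n) (A n).
  apply/seteqP; split=> x.
    by case=> i; rewrite ltnS leq_eqVlt => /orP[/eqP->|lt_in]; [right | left; exists i].
  by case=> [[i lt_in Jx]|Jx]; [exists i; rewrite // ltnS ltnW | exists n].
apply: (PU (boxes n) (J n) (A n)); last exact: IH famn.
- by exists n, J, A.
- exact: fam.
Qed.

Lemma cylU C D : cyl C -> cyl D -> cyl (C `|` D).
Proof.
move=> cC; move: D; apply: cyl_ring_ind => [|D J A cD famJA cCD]; first by rewrite setU0.
by rewrite setUA; apply: cyl_setU_box.
Qed.

Lemma cyl_boxI J A C : box_family J A -> cyl C -> cyl (box J A `&` C).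
Proof.
move=> famJA; move: C; apply: cyl_ring_ind => [|C J' A' cC famJ'A' cJC].
  by rewrite setI0; exact: cyl0.
by rewrite setIUr boxI; apply: cyl_setU_box => //; exact: box_family_meet.
Qed.

Lemma cylI C D : cyl C -> cyl D -> cyl (C `&` D).
Proof.
move=> + cD; move: C; apply: cyl_ring_ind => [|C J A cC famJA cCD].
  by rewrite set0I; exact: cyl0.
by rewrite setIUl; apply: cylU => //; exact: cyl_boxI.
Qed.

Lemma cyl_boxC J A : box_family J A -> cyl (~` box J A).
Proof.
elim: J => [|j J IH] famJA; first by rewrite box_nil setCT; exact: cyl0.
rewrite box_cons setCI; apply: cylU; last by apply: IH => k Jk; apply: famJA; right.
have -> : ~` [set x : X | A j (x j)] = box [:: j] (fun k => ~` A k).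
  by rewrite box_cons box_nil setIT.
by apply: cyl_box => k [<-|[]]; apply: ringC => //; apply: famJA; left.
Qed.

Lemma cylC C : cyl C -> cyl (~` C).
Proof.
move: C; apply: cyl_ring_ind => [|C J A cC famJA cnC].
  by rewrite setC0; exact: cylT.
by rewrite setCU; apply: cylI => //; exact: cyl_boxC.
Qed.

Lemma cyl_covering : covering_ring cyl.
Proof.
split=> [C D|C D|C D cC cD|]; [exact: cylU | exact: cylI | |].
  by rewrite setDE; apply: cylI => //; exact: cylC.
by apply/seteqP; split=> x // _; exists setT => //; exact: cylT.
Qed.

End Cylinders.

Section ProductMeasure.
Variables (R : realType) (K : fieldType) (v : K -> R).
Hypothesis Hv : nonarch_abs v.
Local Unset Implicit Arguments.
Variables (L : Type) (Xs : L -> Type) (Rj : forall j, set (set (Xs j))).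
Variables (muj : forall j, set (Xs j) -> K) (mu : set (forall j, Xs j) -> K).
Local Set Implicit Arguments.
Hypothesis HRj : forall j, covering_ring (Rj j).
Hypothesis Hmuj : forall j, is_prob_measure v (Rj j) (muj j).
Hypothesis Hmu : cylindrical_distribution Rj muj mu.

Local Notation X := (forall j, Xs j).
Local Notation cyl := (cyl_ring Rj).

Let HTj j : Rj j setT. Proof. by case: (Hmuj j). Qed.
Let cyl_cov : covering_ring cyl. Proof. exact: cyl_covering. Qed.
Let cylT : cyl setT. Proof. exact: cylT. Qed.
Let mu_add : fin_additive cyl mu. Proof. exact: Hmu.1. Qed.

Lemma mu_box J A : box_family Rj J A ->
  exists2 J', (forall j, List.In j J' <-> List.In j J) &
    mu (box J A) = \prod_(j <- J') muj j (A j).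
Proof.
move=> famJA; pose dec (x y : L) := pselect (x = y).
exists (List.nodup dec J) => [j|]; first exact: List.nodup_In.
have -> : box J A = box (List.nodup dec J) A.
  by apply/seteqP; split=> x Jx j /List.nodup_In Jj; apply: Jx.
apply: Hmu.2; first exact: List.NoDup_nodup.
by move=> j /List.nodup_In /famJA.
Qed.

Lemma abs_mu_box J A : box_family Rj J A ->
  v (mu (box J A)) <= 1 /\
  forall j, List.In j J -> v (mu (box J A)) <= v (muj j (A j)).
Proof.
move=> famJA; have [J' J'J ->] := mu_box famJA; rewrite abs_prod //.
have in01 j : List.In j J' -> 0 <= v (muj j (A j)) <= 1.
  by move=> /J'J /famJA RA; rewrite abs_ge0 // (prob_abs_le1 (Hmuj j)).
have /andP[_ le1] := prod_in01 in01; split=> // j /J'J.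
exact: prod_le_factor in01.
Qed.

Lemma box_cyl_heavy_box e C : 0 <= e -> cyl C ->
  forall J0 A0, box_family Rj J0 A0 -> e < v (mu (box J0 A0 `&` C)) ->
  exists J A, [/\ box_family Rj J A, box J A `<=` box J0 A0 `&` C &
                  e < v (mu (box J A))].
Proof.
move=> e0; move: C; apply: cyl_ring_ind => [|C J A cC famJA IH] J0 A0 fam0.
  by rewrite setI0 (additive0 cyl_cov cylT mu_add) abs0 // ltNge e0.
have famI := box_family_meet HRj HTj fam0 famJA.
have cB0C := cyl_boxI HRj HTj fam0 cC.
have cB0B := cyl_boxI HRj HTj fam0 (cyl_box famJA).
rewrite setIUr (additive_union cyl_cov mu_add cB0C cB0B).
have -> : (box J0 A0 `&` C) `&` (box J0 A0 `&` box J A) =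
    box (J0 ++ J) (box_meet J0 A0 J A) `&` C.
  by rewrite -boxI; apply/seteqP; split=> x [[]].
rewrite boxI.
move=> /(absDB_gt Hv)[lt_e|lt_e|lt_e].
- have [J' [A' [famJ'A' sub lt_e']]] := IH J0 A0 fam0 lt_e.
  by exists J', A'; split=> // x /sub ?; left.
- by exists (J0 ++ J), (box_meet J0 A0 J A); split=> // x ?; right.
- have [J' [A' [famJ'A' sub lt_e']]] := IH _ _ famI lt_e.
  by exists J', A'; split=> // x /sub[? _]; right.
Qed.

Lemma cyl_heavy_box e C : 0 <= e -> cyl C -> e < v (mu C) ->
  exists J A, [/\ box_family Rj J A, box J A `<=` C & e < v (mu (box J A))].
Proof.
move=> e0 cC; rewrite -[C]setTI -(box_nil (fun j => setT)) => lt_e.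
have fam0 : box_family Rj [::] (fun j => @setT (Xs j)) by [].
have [J [A [famJA sub lt_e']]] := box_cyl_heavy_box e0 cC fam0 lt_e.
by exists J, A; split=> // x /sub[].
Qed.

Lemma cyl_abs_le1 C : cyl C -> v (mu C) <= 1.
Proof.
move=> cC; rewrite leNgt; apply/negP => lt1.
have [J [A [famJA _ lt1']]] := cyl_heavy_box ler01 cC lt1.
by have [le1 _] := abs_mu_box famJA; move: lt1'; rewrite ltNge le1.
Qed.

Lemma mu_setT : mu setT = 1.
Proof.
rewrite -(box_nil (fun j => @setT (Xs j))).
by rewrite (Hmu.2 [::] _ (List.NoDup_nil _)) ?big_nil.
Qed.

Definition coord_heavy (e : R) (x : X) := forall j, heavy v (Rj j) (muj j) e (x j).

Lemma box_coord_heavy_point e J A : 0 < e < 1 -> box_family Rj J A ->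
  e < v (mu (box J A)) -> exists x, box J A x /\ coord_heavy e x.
Proof.
move=> /andP[e0 e1] famJA lt_e.
pose A' j := if `[< List.In j J >] then A j else setT.
have heavy_j j : exists y, A' j y /\ heavy v (Rj j) (muj j) e y.
  case: (Hmuj j) => -[madd _ mcont] RT mT _.
  rewrite /A'; case: asboolP => Jj; apply: (heavy_point Hv (HRj j) RT madd mcont e0).
  - exact: famJA.
  - exact: lt_le_trans lt_e ((abs_mu_box famJA).2 j Jj).
  - exact: RT.
  - by rewrite mT abs1.
exists (fun j => proj1_sig (cid (heavy_j j))); split=> [j Jj|j]; case: cid => y /= [A'y hy] //.
by move: A'y; rewrite /A' asboolT.
Qed.

Lemma cyl_coord_heavy_point e C : 0 < e < 1 -> cyl C -> e < v (mu C) ->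
  exists x, C x /\ coord_heavy e x.
Proof.
move=> e01 cC lt_e; have e0 : 0 <= e by case/andP: e01 => /ltW.
have [J [A [famJA sub lt_e']]] := cyl_heavy_box e0 cC lt_e.
have [x [Jx hx]] := box_coord_heavy_point e01 famJA lt_e'.
by exists x; split=> //; apply: sub.
Qed.

Lemma box_cvg (U : set_system X) x J A : UltraFilter U ->
  (forall j, base_cvg (Rj j) (fmap (fun y => y j) U) (x j)) ->
  box_family Rj J A -> box J A x -> U (box J A).
Proof.
move=> UU cvgx; elim: J => [|j J IH] famJA Jx; first by rewrite box_nil; apply: filterT.
rewrite box_cons; apply: filterI.
  by apply: (cvgx j); [apply: famJA; left | apply: Jx; left].
by apply: IH => k Jk; [apply: famJA | apply: Jx]; right.
Qed.

Lemma cyl_cvg (U : set_system X) x : UltraFilter U ->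
  (forall j, base_cvg (Rj j) (fmap (fun y => y j) U) (x j)) ->
  base_cvg cyl U x.
Proof.
move=> UU cvgx; rewrite /base_cvg.
apply: cyl_ring_ind => [[]|C J A cC famJA IH [Cx|Jx]].
  by apply: filterS (IH Cx); apply: subsetUl.
by apply: filterS (box_cvg UU cvgx famJA Jx); apply: subsetUr.
Qed.

Lemma ultra_coord_cvg e (U : set_system X) : 0 < e -> UltraFilter U ->
  U (coord_heavy e) -> exists x, base_cvg cyl U x.
Proof.
move=> e0 UU Uheavy.
have cvg_j j : exists y, base_cvg (Rj j) (fmap (fun x => x j) U) y.
  have Uj : U ((fun x : X => x j) @^-1` heavy v (Rj j) (muj j) e).
    by apply: filterS Uheavy; rewrite /coord_heavy => x; apply.
  case: (Hmuj j) => -[madd _ mcont] RT _ _.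
  exact: (ultra_heavy_cvg Hv (HRj j) RT madd mcont e0 (ultra_fmap _ UU) Uj).
exists (fun j => proj1_sig (cid (cvg_j j))); apply: cyl_cvg => // j.
by case: cid.
Qed.

Lemma mu_continuity : measure_continuity v cyl mu.
Proof.
move=> S Sc shS capS eps eps0.
have [B0 SB0] : S !=set0.
  apply: bigcap_eq0_nonempty capS; apply: (additive_nonempty cyl_cov cylT mu_add).
  by rewrite mu_setT oner_neq0.
have [le1_eps|lt_eps1] := leP 1 eps.
  by exists B0 => // A SA _; apply: le_trans le1_eps; exact: cyl_abs_le1 (Sc A SA).
apply: contrapT => /tail_large large.
have meet A : S A -> A `&` coord_heavy eps !=set0.
  move=> SA; have [A' [SA' A'A lt_eA']] := large A SA.
  have eps01 : 0 < eps < 1 by rewrite eps0 lt_eps1.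
  have [x [A'x hx]] := cyl_coord_heavy_point eps01 (Sc A' SA') lt_eA'.
  by exists x; split=> //; exact: A'A.
have [U [UU Uheavy SU]] := ultra_trace (ex_intro _ B0 SB0) shS meet.
have [x cvgx] := ultra_coord_cvg eps0 UU Uheavy.
suff : (\bigcap_(A in S) A) x by rewrite capS.
by move=> A SA; apply: (base_cvg_mem cyl_cov cylT UU cvgx (Sc A SA) (SU A SA)).
Qed.

Lemma cyl_prob_measure : is_prob_measure v cyl mu.
Proof. exact: prob_measure_le1 Hv mu_add mu_continuity cylT mu_setT cyl_abs_le1. Qed.

End ProductMeasure.

Theorem theorem2p8 (R : realType) (K : fieldType) (v : K -> R) (p : nat)
  (Hv : nonarch_abs v) (Hnt : nontrivial_abs v) (Hcomp : complete_abs v)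
  (HQp : contains_Qp v p)
  (L : Type) (Xs : L -> Type) (Rj : forall j, set (set (Xs j)))
  (muj : forall j, set (Xs j) -> K)
  (HRj : forall j, covering_ring (Rj j))
  (Hmuj : forall j, is_prob_measure v (Rj j) (muj j))
  (Hcompl : forall j, Rj j = completion v (Rj j) (muj j))
  (Hhaus : forall j, tau_hausdorff (Rj j))
  (mu : set (forall j, Xs j) -> K)
  (Hmu : cylindrical_distribution Rj muj mu) :
  is_prob_measure v (cyl_ring Rj) mu /\
  exists nu : set (forall j, Xs j) -> K,
    [/\ forall A, cyl_ring Rj A -> nu A = mu A,
        covering_ring (completion v (cyl_ring Rj) mu) &
        is_prob_measure v (completion v (cyl_ring Rj) mu) nu].
Proof.
have HTj j : Rj j setT by case: (Hmuj j).
have mu_prob := cyl_prob_measure Hv HRj Hmuj Hmu.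
split=> //; exact: (completion_extension Hv Hcomp (cyl_covering HRj HTj) mu_prob).
Qed.
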